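(* Let $c \geq 1$ and $t$ be integers, let $G$ be a graph of matching width at least $t$, and let $Z$ be a $c$-NSOBDD computing $CNF(G)$. Then $|Z| \geq 2^{t/(2c-1)}$.
   Context: For a graph $G$, the CNF $CNF(G)$ has a variable $X_u$ for each vertex $u$ and a variable $X_{u,v}=X_{v,u}$ for each edge $\{u,v\}$; its clauses are $(X_u \vee X_{u,v} \vee X_v)$ for each edge $\{u,v\}$. Matching width: for a permutation $SV$ of $V(G)$ and a prefix $S_1$ of $SV$, the matching width of $S_1$ is the maximum size of a matching consisting of edges between $S_1$ and $V(G)\setminus S_1$; the matching width of $SV$ is the maximum over its prefixes; the matching width of $G$ is the minimum over all permutations $SV$ of $V(G)$. A non-deterministic branching program is a directed acyclic graph with one root and one leaf, some of whose edges are labelled by literals of variables. A path is consistent if it does not contain two edges labelled by opposite literals of the same variable; a consistent root-leaf path is a computational path. The program computes $F$: an assignment $S$ (as a set of literals) satisfies $F$ iff some computational path has all its labels in $S$. A $c$-NSOBDD is such a program for which there is a permutation $SV$ of its variables such that every computational path $P$ can be written as $P=P_1+\dots+P_c$ (concatenation of subpaths) where on each $P_i$ each variable occurs at most once and the labels along $P_i$ are ordered according to $SV$. $|Z|$ denotes the number of nodes of $Z$. *)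

From Stdlib Require Import Reals ZArith.
From mathcomp Require Import all_boot fingroup perm.
Set Implicit Arguments. Unset Strict Implicit. Unset Printing Implicit Defensive.

(* Edges {u,v} of G, as unordered pairs (so X_{u,v} = X_{v,u}). *)
Definition is_edge (V : finType) (E : rel V) (s : {set V}) : bool :=
  [exists u, exists v, E u v && (s == [set u; v])].
Definition edgeT (V : finType) (E : rel V) := {s : {set V} | is_edge E s}.

(* Variables of CNF(G): X_u for vertices u, X_{u,v} for edges {u,v}. *)
Definition cnf_var (V : finType) (E : rel V) : finType := (V + edgeT E)%type.

Definition edge_var (V : finType) (E : rel V) (u v : V) (h : E u v) : cnf_var E.
Proof.
  refine (inr (exist _ [set u; v] _)).
  apply/existsP; exists u; apply/existsP; exists v; by rewrite h eqxx.
Defined.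

Definition CNF (V : finType) (E : rel V) (a : cnf_var E -> bool) : Prop :=
  forall (u v : V) (h : E u v), [|| a (inl u), a (edge_var h) | a (inl v)].

Definition crossing_matching (V : finType) (E : rel V) (S1 : {set V})
    (M : {set V * V}) : bool :=
  [forall p in M, [&& E p.1 p.2, p.1 \in S1 & p.2 \notin S1]] &&
  [forall p in M, forall q in M, (p != q) ==> (p.1 != q.1) && (p.2 != q.2)].

Definition mw_prefix (V : finType) (E : rel V) (S1 : {set V}) : nat :=
  \max_(M : {set V * V} | crossing_matching E S1 M) #|M|.

Definition mw_perm (V : finType) (E : rel V) (SV : seq V) : nat :=
  \max_(i < #|V|.+1) mw_prefix E [set x in take i SV].

(* matching width of G: minimum over all permutations of V(G)
   (the index type {perm V} is never empty, so the unit #|V| is irrelevant) *)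
Definition matching_width (V : finType) (E : rel V) : nat :=
  \big[minn/#|V|]_(s : {perm V}) mw_perm E [seq s x | x <- enum V].

(* Nodes N; an arc is (source, target, optional literal label);
   a literal is (x, b): b = true is the positive literal x, b = false is ~x. *)
Definition bp_arc (N X : Type) := (N * N * option (X * bool))%type.

Fixpoint is_walk (N X : eqType) (u : N) (p : seq (bp_arc N X)) (v : N) : bool :=
  if p is a :: p' then (a.1.1 == u) && is_walk a.1.2 p' v else u == v.

Definition labels (N X : Type) (p : seq (bp_arc N X)) : seq (X * bool) :=
  pmap (fun a => a.2) p.

Definition is_BP (N X : finType) (root leaf : N) (A : seq (bp_arc N X)) : Prop :=
  [/\ (forall (u : N) (p : seq (bp_arc N X)),
         p != [::] -> all (mem A) p -> ~~ is_walk u p u),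
      all (fun a => a.1.2 != root) A,
      all (fun a => a.1.1 != leaf) A,
      (forall n : N, n != root -> has (fun a => a.1.2 == n) A) &
      (forall n : N, n != leaf -> has (fun a => a.1.1 == n) A)].

Definition consistent (N X : eqType) (p : seq (bp_arc N X)) : bool :=
  all (fun l => (l.1, ~~ l.2) \notin labels p) (labels p).

Definition comp_path (N X : finType) (root leaf : N) (A : seq (bp_arc N X))
    (p : seq (bp_arc N X)) : bool :=
  [&& all (mem A) p, is_walk root p leaf & consistent p].

Definition computes (N X : finType) (root leaf : N) (A : seq (bp_arc N X))
    (F : (X -> bool) -> Prop) : Prop :=
  forall a : X -> bool,
    F a <-> exists p, comp_path root leaf A p /\
                      all (fun l => a l.1 == l.2) (labels p).

(* c-NSOBDD: there is a permutation SV of the variables such that every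
   computational path splits into c consecutive subpaths, along each of which
   every variable occurs at most once and labels follow the order SV
   (i.e. the SV-positions of the labelled variables strictly increase). *)
Definition c_NSOBDD (N X : finType) (c : nat) (root leaf : N)
    (A : seq (bp_arc N X)) : Prop :=
  exists SV : seq X, perm_eq SV (enum X) /\
    forall p, comp_path root leaf A p ->
      exists ps : seq (seq (bp_arc N X)),
        [/\ size ps = c, flatten ps = p &
            all (fun q => sorted ltn [seq index l.1 SV | l <- labels q]) ps].

From Stdlib Require Import Reals ZArith ClassicalEpsilon Lia Lra.
From mathcomp Require Import all_boot perm zify.
Set Implicit Arguments. Unset Strict Implicit. Unset Printing Implicit Defensive.

(* Fix the variable order SV of Z and let S1 be the prefix (in the SV order of the
   vertex variables) of a vertex ordering crossed by a matching M of size at least the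
   matching width. Each T \subset M gives a satisfying assignment of CNF(G), hence an
   accepting path. Cutting each of its c ordered pieces at the boundary of S1 yields
   2c pieces alternately reading only "low" and only "high" variables; their junction
   nodes form a (2c-1)-tuple of nodes (the last is the leaf). If T and T' produce the
   same tuple, splicing the low pieces of one path with the high pieces of the other
   is an accepting path for a hybrid assignment that falsifies the clause of any edge
   of T' outside T. So T |-> tuple is injective and 2^|M| <= |Z|^(2c-1). *)

Section Walks.
Variables N X : eqType.
Implicit Types (u v : N) (p q : seq (bp_arc N X)) (ss : seq (seq (bp_arc N X))).

Fixpoint walk_end u p : N := if p is a :: p' then walk_end a.1.2 p' else u.

Lemma is_walk_end u p v : is_walk u p v -> walk_end u p = v.
Proof. by elim: p u => [|a p IH] u /=; [move/eqP | case/andP=> _ /IH]. Qed.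

Lemma is_walk_cat u p q v :
  is_walk u (p ++ q) v = is_walk u p (walk_end u p) && is_walk (walk_end u p) q v.
Proof. elim: p u => [|a p IH] u /=; first by rewrite eqxx. by rewrite IH andbA. Qed.

Fixpoint junctions u ss : seq N :=
  if ss is s :: ss' then walk_end u s :: junctions (walk_end u s) ss' else [::].

Lemma size_junctions u ss : size (junctions u ss) = size ss.
Proof. by elim: ss u => [|s ss IH] u //=; rewrite IH. Qed.

Lemma last_junctions u ss : last u (junctions u ss) = walk_end u (flatten ss).
Proof.
elim: ss u => [|s ss IH] u //=.
by rewrite IH; elim: s u {IH} => [|a s IHs] u //=.
Qed.

End Walks.

Fixpoint mix (T : Type) (b : bool) (s s' : seq T) : seq T :=
  match s, s' with
  | x :: r, x' :: r' => (if b then x' else x) :: mix (~~ b) r r'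
  | _, _ => [::]
  end.

Lemma all_flatten_mix (T : Type) (P : pred T) b (ss ss' : seq (seq T)) :
  all P (flatten ss) -> all P (flatten ss') -> all P (flatten (mix b ss ss')).
Proof.
elim: ss ss' b => [|s ss IH] [|s' ss'] b //=.
rewrite !all_cat => /andP[Ps Pss] /andP[Ps' Pss'].
by rewrite (IH _ _ Pss Pss') andbT; case: b.
Qed.

Lemma is_walk_mix (N X : eqType) b (u v : N) (ss ss' : seq (seq (bp_arc N X))) :
  junctions u ss = junctions u ss' ->
  is_walk u (flatten ss) v -> is_walk u (flatten ss') v ->
  is_walk u (flatten (mix b ss ss')) v.
Proof.
elim: ss ss' u b => [|s ss IH] [|s' ss'] u b //= [ends jss].
rewrite !is_walk_cat ends in jss * => /andP[ws wss] /andP[ws' wss'].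
have -> : walk_end u (if b then s' else s) = walk_end u s' by case: b.
by rewrite (IH ss') // andbT; case: b.
Qed.

Section Labels.
Variables N X : eqType.
Implicit Types (p q : seq (bp_arc N X)) (ss : seq (seq (bp_arc N X))).

Lemma labels_cat p q : labels (p ++ q) = labels p ++ labels q.
Proof. exact: pmap_cat. Qed.

Definition agrees (a : X -> bool) p : bool := all (fun l => a l.1 == l.2) (labels p).

Lemma agrees_consistent a p : agrees a p -> consistent p.
Proof.
move=> ag; apply/allP=> l l_in; apply/negP=> opp_in.
by move: (allP ag _ opp_in) (allP ag _ l_in) => /= /eqP -> /eqP; case: (l.2).
Qed.

Fixpoint alternating (low : pred X) (b : bool) ss : bool :=
  if ss is s :: ss' then
    all (fun l => if b then ~~ low l.1 else low l.1) (labels s) &&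
    alternating low (~~ b) ss'
  else true.

Lemma agrees_mix (low : pred X) (a a' : X -> bool) b ss ss' :
  alternating low b ss -> alternating low b ss' ->
  agrees a (flatten ss) -> agrees a' (flatten ss') ->
  agrees (fun x => if low x then a x else a' x) (flatten (mix b ss ss')).
Proof.
rewrite /agrees; elim: ss ss' b => [|s ss IH] [|s' ss'] b //=.
rewrite !labels_cat !all_cat => /andP[lows alts] /andP[lows' alts'].
move=> /andP[ags agss] /andP[ags' agss'].
rewrite (IH _ _ alts alts' agss agss') andbT {IH alts alts' agss agss'}.
case: b lows lows' => lows lows'; apply/allP=> l l_in.
- by move: (allP lows' l l_in) (allP ags' l l_in) => /negbTE ->.
- by move: (allP lows l l_in) (allP ags l l_in) => ->.
Qed.

Variables (key : X -> nat) (low : pred X).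
Hypothesis low_lower : forall x y, key x <= key y -> low y -> low x.

Lemma split_sorted_piece q :
  sorted ltn [seq key l.1 | l <- labels q] ->
  exists ql qh, [/\ q = ql ++ qh, all (fun l => low l.1) (labels ql) &
                    all (fun l => ~~ low l.1) (labels qh)].
Proof.
elim: q => [|a q IH]; first by exists [::], [::].
case: a => st [l|]; last first.
  by move/IH=> [ql [qh [-> lowl highh]]]; exists ((st, None) :: ql), qh.
move=> srt; have [ql [qh [q_eq lowl highh]]] := IH (path_sorted srt).
case low_l: (low l.1).
  by exists ((st, Some l) :: ql), qh; rewrite q_eq /= low_l.
exists [::], ((st, Some l) :: q); split => //=; rewrite low_l /=.
have : path ltn (key l.1) [seq key l'.1 | l' <- labels q] := srt.
move/(order_path_min ltn_trans); rewrite all_map => /allP key_gt.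
apply/allP=> l' l'_in; apply: contraFN low_l => low_l'.
exact: low_lower (ltnW (key_gt l' l'_in)) low_l'.
Qed.

Lemma split_sorted_pieces ps :
  all (fun q => sorted ltn [seq key l.1 | l <- labels q]) ps ->
  exists ss, [/\ flatten ss = flatten ps, size ss = (2 * size ps)%N &
                 alternating low false ss].
Proof.
elim: ps => [|q ps IH] /=; first by exists [::].
case/andP=> /split_sorted_piece [ql [qh [-> lowl highh]]] /IH [ss [fl sz alt]].
exists [:: ql, qh & ss]; split => /=; first by rewrite fl catA.
  by rewrite sz mulnS.
by rewrite lowl highh alt.
Qed.

End Labels.

Lemma bigmin_le_seq (I : eqType) (r : seq I) (F : I -> nat) x i :
  i \in r -> \big[minn/x]_(j <- r) F j <= F i.
Proof.
elim: r => [|j r IH] //; rewrite in_cons big_cons => /orP[/eqP <-|i_in].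
  exact: geq_minl.
exact: leq_trans (geq_minr _ _) (IH i_in).
Qed.

Section MatchingWidth.
Variables (V : finType) (E : rel V).

Lemma matching_width_le_perm (vs : seq V) :
  perm_eq vs (enum V) -> matching_width E <= mw_perm E vs.
Proof.
move=> vs_perm.
have vs_uniq : uniq vs by rewrite (perm_uniq vs_perm) enum_uniq.
have vs_size : size vs = size (enum V) by apply: perm_size.
pose f x := nth x vs (index x (enum V)).
have f_inj : injective f.
  move=> x y; rewrite /f => fxy.
  have ltx : index x (enum V) < size vs by rewrite vs_size index_mem mem_enum.
  have lty : index y (enum V) < size vs by rewrite vs_size index_mem mem_enum.
  move: fxy; rewrite (set_nth_default x y lty) => /eqP; rewrite nth_uniq // => /eqP.
  by move/(congr1 (nth x (enum V))); rewrite !nth_index ?mem_enum.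
suff <- : [seq perm f_inj x | x <- enum V] = vs.
  exact: bigmin_le_seq (mem_index_enum _).
case def_vs: vs vs_size => [|x0 r] sz.
  by move/esym/size0nil: sz => ->.
rewrite -def_vs; apply: (@eq_from_nth _ x0); first by rewrite size_map def_vs.
move=> i; rewrite size_map => lti.
rewrite (nth_map x0) // permE /f index_uniq ?enum_uniq //.
by apply: set_nth_default; rewrite def_vs sz.
Qed.

Lemma mw_perm_witness (vs : seq V) :
  exists i (M : {set V * V}),
    crossing_matching E [set x in take i vs] M /\ mw_perm E vs = #|M|.
Proof.
pose prefix_mw (i : 'I_#|V|.+1) := mw_prefix E [set x in take i vs].
rewrite /mw_perm; have [i ->] := @eq_bigmax _ prefix_mw ltac:(by rewrite card_ord).
rewrite /prefix_mw.
have : 0 < #|crossing_matching E [set x in take i vs]|.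
  apply/card_gt0P; exists set0; rewrite unfold_in /crossing_matching.
  by apply/andP; split; apply/forallP=> p; rewrite in_set0.
case/(eq_bigmax_cond (fun M : {set V * V} => #|M|)) => M M_cross M_max.
by exists i, M; split; rewrite // /mw_prefix -M_max; apply: eq_bigl => M'; rewrite unfold_in.
Qed.

End MatchingWidth.

Lemma sorted_prefix_lower (T : eqType) (key : T -> nat) (s : seq T) i x y :
  {in s &, injective key} -> sorted [rel a b | key a <= key b] s ->
  x \in s -> key x <= key y -> y \in take i s -> x \in take i s.
Proof.
move=> key_inj srt x_in le_xy y_in; apply: contraT => x_notin.
have x_drop : x \in drop i s.
  by move: x_in; rewrite -{1}(cat_take_drop i s) mem_cat (negbTE x_notin).
move: srt; rewrite (sorted_pairwise (fun a b c => @leq_trans (key a) (key b) (key c))).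
rewrite -(cat_take_drop i s) pairwise_cat => /and3P[/allrelP take_le_drop _ _].
have y_s : y \in s by apply: mem_take y_in.
suff xy : x = y by rewrite xy y_in in x_notin.
by apply: key_inj => //; apply/eqP; rewrite eqn_leq le_xy take_le_drop.
Qed.

Lemma crossing_prefix (V : finType) (E : rel V) (SV : seq (cnf_var E)) :
  perm_eq SV (enum (cnf_var E)) ->
  exists (S1 : {set V}) (M : {set V * V}),
   [/\ crossing_matching E S1 M, matching_width E <= #|M| &
     forall w w', index (inl w) SV <= index (inl w') SV -> w' \in S1 -> w \in S1].
Proof.
move=> SV_perm; pose key w := index (inl w : cnf_var E) SV.
pose vs := sort [rel a b | key a <= key b] (enum V).
have vs_perm : perm_eq vs (enum V) by rewrite perm_sort.
have [i [M [M_cross mwM]]] := mw_perm_witness E vs.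
exists [set x in take i vs], M; split => //.
  by rewrite -mwM; apply: matching_width_le_perm.
move=> w w' le_ww'; rewrite !inE; apply: (@sorted_prefix_lower _ key) le_ww'.
- have inSV z : (inl z : cnf_var E) \in SV by rewrite (perm_mem SV_perm) mem_enum.
  by move=> x y _ _ /(index_inj (inl x) (inSV x) (inSV y)) [].
- by apply: sort_sorted => a b; apply: leq_total.
- by rewrite (perm_mem vs_perm) mem_enum.
Qed.

Lemma set2_eq_cases (T : finType) (a b c d : T) :
  c != d -> [set a; b] = [set c; d] -> (a = c /\ b = d) \/ (a = d /\ b = c).
Proof.
move=> neq_cd ab_cd.
have /set2P c_ab : c \in [set a; b] by rewrite ab_cd set21.
have /set2P d_ab : d \in [set a; b] by rewrite ab_cd set22.
by case: c_ab d_ab neq_cd => -> [] ->; rewrite ?eqxx //; [left | right].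
Qed.

Section MatchingAssignment.
Variables (V : finType) (E : rel V) (S1 : {set V}) (M : {set V * V}).
Hypothesis M_cross : crossing_matching E S1 M.

(* T \subset M selects, on each matching edge p, which endpoint is true:
   p.1 iff p \in T, p.2 iff p \notin T; matching edge variables are false. *)
Definition matching_assignment (T : {set V * V}) (x : cnf_var E) : bool :=
  match x with
  | inl w => if w \in S1 then [exists q in M, (q \in T) && (q.1 == w)]
             else ~~ [exists q in M, (q \in T) && (q.2 == w)]
  | inr e => ~~ [exists q in M, val e == [set q.1; q.2]]
  end.

Lemma crossing_edge p : p \in M -> [/\ E p.1 p.2, p.1 \in S1 & p.2 \notin S1].
Proof. by move=> p_in; case/andP: M_cross => /forallP/(_ p) + _; rewrite p_in => /and3P. Qed.

Lemma crossing_disjoint p q :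
  p \in M -> q \in M -> p != q -> (p.1 != q.1) && (p.2 != q.2).
Proof.
move=> p_in q_in; case/andP: M_cross => _ /forallP/(_ p).
by rewrite p_in /= => /forallP/(_ q); rewrite q_in /= => /implyP.
Qed.

Lemma matching_assignment_fst T p :
  p \in M -> matching_assignment T (inl p.1) = (p \in T).
Proof.
move=> p_in; have [_ p1_in _] := crossing_edge p_in; rewrite /= p1_in.
apply/existsP/idP => [[q /and3P[q_in qT /eqP q1]] | pT]; last by exists p; rewrite p_in pT /=.
case: (eqVneq q p) => [<- // | neq].
by move: (crossing_disjoint q_in p_in neq); rewrite q1 eqxx.
Qed.

Lemma matching_assignment_snd T p :
  p \in M -> matching_assignment T (inl p.2) = (p \notin T).
Proof.
move=> p_in; have [_ _ p2_out] := crossing_edge p_in; rewrite /= (negbTE p2_out).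
congr negb; apply/existsP/idP => [[q /and3P[q_in qT /eqP q2]] | pT].
  case: (eqVneq q p) => [<- // | neq].
  by move: (crossing_disjoint q_in p_in neq); rewrite q2 eqxx andbF.
by exists p; rewrite p_in pT /=.
Qed.

Lemma matching_assignment_edge T p (h : E p.1 p.2) :
  p \in M -> matching_assignment T (edge_var h) = false.
Proof. by move=> p_in; apply/negbF/existsP; exists p; rewrite p_in eqxx. Qed.

Lemma matching_assignment_CNF T : CNF (matching_assignment T).
Proof.
move=> u v h; case: (boolP (matching_assignment T (edge_var h))) => [|]; first by rewrite orbT.
move=> /negbNE/existsP[p /andP[p_in /eqP uv_p]].
have [_ p1_in p2_out] := crossing_edge p_in.
have p1_neq_p2 : p.1 != p.2 by apply: contraNneq p2_out => <-.
have fst := matching_assignment_fst T p_in; have snd := matching_assignment_snd T p_in.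
by case: (set2_eq_cases p1_neq_p2 uv_p) => -[-> ->]; rewrite fst snd; case: (p \in T).
Qed.

(* Low endpoints follow T, high endpoints follow T': for p \in T' :\: T all three
   variables of the clause of p are false. *)
Lemma hybrid_not_CNF (low : pred (cnf_var E)) (T T' : {set V * V}) p :
  (forall w, low (inl w) = (w \in S1)) -> p \in M -> p \notin T -> p \in T' ->
  ~ CNF (fun x => if low x then matching_assignment T x else matching_assignment T' x).
Proof.
move=> low_inl p_in pT pT' sat; have [h p1_in p2_out] := crossing_edge p_in.
move: (sat _ _ h); rewrite !low_inl p1_in (negbTE p2_out) matching_assignment_fst //.
by rewrite matching_assignment_snd // pT' (negbTE pT) !matching_assignment_edge // if_same.
Qed.

End MatchingAssignment.

Lemma take_last_inj (T : Type) (x : T) (s s' : seq T) n :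
  size s = n.+1 -> size s' = n.+1 ->
  take n s = take n s' -> last x s = last x s' -> s = s'.
Proof.
case/lastP: s => [//|r y]; case/lastP: s' => [//|r' y'].
rewrite !size_rcons !last_rcons => -[<-] [sz'].
by rewrite -!cats1 take_size_cat // -sz' take_size_cat // => -> ->.
Qed.

Section FoolingSet.
Variables (V : finType) (E : rel V) (N : finType) (root leaf : N).
Variables (A : seq (bp_arc N (cnf_var E))) (c : nat) (SV : seq (cnf_var E)).
Variables (S1 : {set V}) (M : {set V * V}).
Hypothesis c_gt0 : 0 < c.
Hypothesis M_cross : crossing_matching E S1 M.
Hypothesis S1_lower :
  forall w w', index (inl w) SV <= index (inl w') SV -> w' \in S1 -> w \in S1.
Hypothesis split_paths : forall p, comp_path root leaf A p ->
  exists ps : seq (seq (bp_arc N (cnf_var E))),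
    [/\ size ps = c, flatten ps = p &
        all (fun q => sorted ltn [seq index l.1 SV | l <- labels q]) ps].
Hypothesis A_computes : computes root leaf A (@CNF V E).

Let low (x : cnf_var E) := [exists w in S1, index x SV <= index (inl w : cnf_var E) SV].

Let low_lower x y : index x SV <= index y SV -> low y -> low x.
Proof.
move=> le_xy /existsP[w /andP[w_in le_yw]]; apply/existsP; exists w.
by rewrite w_in (leq_trans le_xy le_yw).
Qed.

Let low_inl w : low (inl w) = (w \in S1).
Proof.
apply/existsP/idP => [[w' /andP[w'_in le_ww']] | w_in]; first exact: S1_lower le_ww' w'_in.
by exists w; rewrite w_in leqnn.
Qed.

Definition fooling_pieces (T : {set V * V}) (ss : seq (seq (bp_arc N (cnf_var E)))) :=
  [/\ alternating low false ss, size ss = (2 * c)%N, all (mem A) (flatten ss),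
      is_walk root (flatten ss) leaf & agrees (matching_assignment S1 M T) (flatten ss)].

Lemma exists_fooling_pieces T : exists ss, fooling_pieces T ss.
Proof.
have [p [p_comp p_agrees]] := (A_computes _).1 (matching_assignment_CNF M_cross T).
have [ps [ps_size ps_flat ps_sorted]] := split_paths p_comp.
have [ss [ss_flat ss_size ss_alt]] := split_sorted_pieces low_lower ps_sorted.
case/and3P: p_comp => p_A p_walk _.
by exists ss; rewrite /fooling_pieces ss_flat ss_size ps_size ps_flat.
Qed.

Let pieces T := proj1_sig (constructive_indefinite_description _ (exists_fooling_pieces T)).

Let pieces_fooling T : fooling_pieces T (pieces T).
Proof. exact: proj2_sig. Qed.

Let junction T := junctions root (pieces T).

Let junction_size T : size (junction T) = (2 * c)%N.
Proof. by have [_ sz _ _ _] := pieces_fooling T; rewrite size_junctions. Qed.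

Let junction_last T : last root (junction T) = leaf.
Proof.
by have [_ _ _ walk _] := pieces_fooling T; rewrite last_junctions (is_walk_end walk).
Qed.

(* Splice the low pieces of the path of T with the high pieces of the path of T'. *)
Lemma junction_splice T T' : junction T = junction T' -> T' :&: M \subset T.
Proof.
move=> same_junction; apply/subsetP => p; rewrite inE => /andP[pT' p_in].
apply/negPn/negP => pT; apply: (hybrid_not_CNF M_cross low_inl p_in pT pT').
have [alt _ A_ss walk ag] := pieces_fooling T.
have [alt' _ A_ss' walk' ag'] := pieces_fooling T'.
have ag_mix := agrees_mix alt alt' ag ag'.
apply/A_computes; exists (flatten (mix false (pieces T) (pieces T'))); split => //.
apply/and3P; split; first exact: all_flatten_mix.
  exact: is_walk_mix.
exact: agrees_consistent ag_mix.
Qed.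

(* The last junction is always [leaf]. *)
Let code T : (2 * c - 1).-tuple N :=
  insubd (nseq_tuple _ root) (take (2 * c - 1) (junction T)).

Let code_inj : {in powerset M &, injective code}.
Proof.
have sz : (2 * c - 1).+1 = (2 * c)%N by rewrite subn1 prednK // muln_gt0.
have take_size T : size (take (2 * c - 1) (junction T)) = (2 * c - 1)%N.
  by rewrite size_takel // junction_size leq_subr.
move=> T T'; rewrite !powersetE => TM T'M /(congr1 val).
rewrite !val_insubd !take_size eqxx => same_take.
have same_junction : junction T = junction T'.
  apply: (@take_last_inj _ root _ _ _ _ _ same_take);
  by rewrite ?junction_last ?junction_size ?sz.
move: (junction_splice same_junction) (junction_splice (esym same_junction)).
by rewrite (setIidPl TM) (setIidPl T'M) => sub sub'; apply/eqP; rewrite eqEsubset sub sub'.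
Qed.

Lemma card_powerset_le : 2 ^ #|M| <= #|N| ^ (2 * c - 1).
Proof. by rewrite -card_powerset -card_tuple; apply: leq_card_in code_inj. Qed.

End FoolingSet.

Local Open Scope R_scope.

Lemma INR_expn (a b : nat) : INR (a ^ b)%N = INR a ^ b.
Proof. by elim: b => [|b IH] //; rewrite expnS mult_INR IH. Qed.

Lemma Rpower_le_of_expn_le (K m n : nat) (t : Z) :
  (0 < m)%N -> (0 < n)%N -> (2 ^ K <= n ^ m)%N -> (t <= Z.of_nat K)%Z ->
  Rpower 2 (IZR t / INR m) <= INR n.
Proof.
move=> /ltP/lt_0_INR m_gt0 /ltP/lt_0_INR n_gt0 /leP/le_INR le_pow le_tK.
rewrite !INR_expn in le_pow.
have -> : INR n = Rpower (Rpower (INR n) (INR m)) (/ INR m).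
  by rewrite Rpower_mult Rinv_r ?Rpower_1 //; apply: Rgt_not_eq.
apply: Rle_trans (_ : Rpower (Rpower 2 (INR K)) (/ INR m) <= _).
  rewrite Rpower_mult; apply: Rle_Rpower; first lra.
  apply: Rmult_le_compat_r; first by left; apply: Rinv_0_lt_compat.
  by rewrite INR_IZR_INZ; apply: IZR_le.
apply: Rle_Rpower_l; first by left; apply: Rinv_0_lt_compat.
rewrite !Rpower_pow //; last lra.
by split=> //; apply: pow_lt; lra.
Qed.

Local Close Scope R_scope.

Unset Implicit Arguments.
Theorem theorem4 (V : finType) (E : rel V)
    (HS : symmetric E) (HI : irreflexive E)
    (c : nat) (t : Z)
    (N : finType) (root leaf : N) (A : seq (bp_arc N (cnf_var E))) :
  (1 <= c)%N ->
  (t <= Z.of_nat (matching_width E))%Z ->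
  is_BP root leaf A ->
  c_NSOBDD c root leaf A ->
  computes root leaf A (@CNF V E) ->
  Rle (Rpower 2 (Rdiv (IZR t) (INR (2 * c - 1)))) (INR #|{: N}|).
Proof.
move=> c_gt0 t_le _ [SV [SV_perm split_paths]] A_computes.
have [S1 [M [M_cross mw_le S1_lower]]] := crossing_prefix SV_perm.
have card_le := card_powerset_le c_gt0 M_cross S1_lower split_paths A_computes.
apply: (Rpower_le_of_expn_le _ _ card_le); first by lia.
  by apply/card_gt0P; exists root.
by lia.
Qed.
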